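(* There exists an absolute constant $U>0$ such that for every member $S_l$ of the degenerating family, every $z\in H$ with $\operatorname{Im} z<1$ and every $t\ge 0$, $$\Pi_l(z,t)\le U e^{t}.$$
   Context: Let $\{S_l\}$ be a degenerating family of hyperbolic Riemann surfaces of genus $g$ with one puncture, parametrized by $l$ near $0\in\mathbf{R}^{6g-4}$. For each $l$, $\Gamma_l$ is a Fuchsian group with $S_l\simeq H/\Gamma_l$, where $H=\{z\in\mathbf C:\operatorname{Im} z>0\}$ carries the hyperbolic metric with distance $d(\cdot,\cdot)$; $\Gamma_l$ is normalized so that it contains the parabolic element $z\mapsto z+1$, and $\Gamma_\infty$ denotes the cyclic group generated by it. For $z\in H$ and a class $[\delta]\in\Gamma_\infty\backslash\Gamma_l$, the canonical representative $\hat\delta=\hat\delta(z,[\delta])$ is the unique element of $[\delta]$ with $-\tfrac12\le \operatorname{Re}\hat\delta z<\tfrac12$. For $z$ with $\operatorname{Im} z<1$ define $\Pi_l(z,t)=\#\{[\delta]\in\Gamma_\infty\backslash\Gamma_l : d(i,\hat\delta z)\le t\}$. *)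

From Stdlib Require Import Reals Lra List ZArith.
Open Scope R_scope.

(* 2x2 real matrices; Gamma is a subset of SL2(R) closed under negation,
   i.e. the full preimage of a subgroup of PSL2(R). *)
Record mat2 := M2 { ma : R; mb : R; mc : R; md : R }.

Definition mI : mat2 := M2 1 0 0 1.
Definition mmul (g h : mat2) : mat2 :=
  M2 (ma g * ma h + mb g * mc h) (ma g * mb h + mb g * md h)
     (mc g * ma h + md g * mc h) (mc g * mb h + md g * md h).
Definition mopp (g : mat2) : mat2 := M2 (- ma g) (- mb g) (- mc g) (- md g).
Definition mdet (g : mat2) : R := ma g * md g - mb g * mc g.
(* inverse of a determinant-one matrix *)
Definition minv (g : mat2) : mat2 := M2 (md g) (- mb g) (- mc g) (ma g).
Definition mtr (g : mat2) : R := ma g + md g.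
Definition Tn (n : Z) : mat2 := M2 1 (IZR n) 0 1.

(* Points of H are pairs (x, y) standing for x + i y, with y > 0. *)
Definition Re (z : R * R) : R := fst z.
Definition Im (z : R * R) : R := snd z.
Definition ipt : R * R := (0, 1).

(* Moebius action z |-> (a z + b) / (c z + d) of a determinant-one matrix,
   written out in real coordinates. *)
Definition act (g : mat2) (z : R * R) : R * R :=
  let x := fst z in let y := snd z in
  let D := (mc g * x + md g) ^ 2 + (mc g * y) ^ 2 in
  (((ma g * x + mb g) * (mc g * x + md g) + ma g * mc g * y ^ 2) / D,
   mdet g * y / D).

Definition arcosh (u : R) : R := ln (u + sqrt (u ^ 2 - 1)).
Definition hdist (z w : R * R) : R :=
  arcosh (1 + ((Re z - Re w) ^ 2 + (Im z - Im w) ^ 2) / (2 * Im z * Im w)).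

(* Gamma_infty = <z |-> z+1> in PSL2(R), i.e. {+-T^n} in SL2(R);
   two elements lie in the same class of Gamma_infty \ Gamma. *)
Definition same_coset (d d' : mat2) : Prop :=
  exists n : Z, d' = mmul (Tn n) d \/ d' = mopp (mmul (Tn n) d).

Definition is_SL2_subgroup (G : mat2 -> Prop) : Prop :=
  G mI /\
  (forall g h, G g -> G h -> G (mmul g h)) /\
  (forall g, G g -> G (minv g)) /\
  (forall g, G g -> G (mopp g)) /\
  (forall g, G g -> mdet g = 1).

Definition is_discrete (G : mat2 -> Prop) : Prop :=
  exists eps, 0 < eps /\ forall g, G g -> g <> mI ->
    eps <= Rabs (ma g - 1) + Rabs (mb g) + Rabs (mc g) + Rabs (md g - 1).

(* no elliptic elements (S_l is a surface without cone points) *)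
Definition torsion_free (G : mat2 -> Prop) : Prop :=
  forall g, G g -> g <> mI -> g <> mopp mI -> 2 <= Rabs (mtr g).

Definition normalized_cusp (G : mat2 -> Prop) : Prop :=
  G (Tn 1) /\
  forall g, G g -> mc g = 0 -> exists n : Z, g = Tn n \/ g = mopp (Tn n).

(* exactly one puncture: every parabolic element is conjugate in G to
   a nontrivial power of z |-> z+1 *)
Definition one_cusp (G : mat2 -> Prop) : Prop :=
  forall g, G g -> g <> mI -> g <> mopp mI -> Rabs (mtr g) = 2 ->
    exists h (n : Z), G h /\ n <> 0%Z /\
      (g = mmul h (mmul (Tn n) (minv h)) \/
       g = mopp (mmul h (mmul (Tn n) (minv h)))).

Definition punctured_surface_group (G : mat2 -> Prop) : Prop :=
  is_SL2_subgroup G /\ is_discrete G /\ torsion_free G /\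
  normalized_cusp G /\ one_cusp G.

(* [delta] is counted in Pi(z,t): its canonical representative hat-delta
   (the element of the class with -1/2 <= Re(hat-delta z) < 1/2) satisfies
   d(i, hat-delta z) <= t. *)
Definition counted (G : mat2 -> Prop) (z : R * R) (t : R) (d : mat2) : Prop :=
  G d /\
  exists dh, same_coset d dh /\
    -1/2 <= Re (act dh z) < 1/2 /\ hdist ipt (act dh z) <= t.

(* Pi(z,t) <= N : every family of pairwise distinct classes
   [delta] in Gamma_infty \ Gamma counted in Pi(z,t) has at most N elements
   (in particular Pi(z,t) is finite). *)
Definition Pi_le (G : mat2 -> Prop) (z : R * R) (t N : R) : Prop :=
  forall s : list mat2,
    (forall d, In d s -> counted G z t d) ->
    (forall i j, (i < length s)%nat -> (j < length s)%nat -> i <> j ->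
        ~ same_coset (nth i s mI) (nth j s mI)) ->
    INR (length s) <= N.

From Stdlib Require Import Reals Lra Lia List ZArith.
Open Scope R_scope.

(* A class [delta] counted in [Pi(z,t)] has [|c z + d|^2 <= 2 Im z e^t],
   because [Im (delta z) = Im z / |c z + d|^2] and [e^(d(i,w)) >= 1 / (2 Im w)].
   Bottom rows [(c,d)], [(c',d')] of distinct classes satisfy
   [|c d' - c' d| >= 1]: up to sign this is the lower-left entry of
   [delta' delta^-1], which vanishes only for equal classes (the stabilizer of
   [oo] is generated by [z |-> z + 1]) and is otherwise at least 1 in modulus
   by Shimizu's lemma. Consequently, for [c, c' <> 0] the arguments of
   [c z + d] and [c' z + d'] differ by at least [e^(-t)/2] modulo [pi], as
   [|sin| = Im z |c d' - c' d| / (|c z + d| |c' z + d'|)]. So at most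
   [2 pi e^t + 1] classes have [c <> 0], and at most one has [c = 0]. *)

Lemma exp_le_compat (x y : R) : x <= y -> exp x <= exp y.
Proof.
  intros [Hlt | ->]; [left; now apply exp_increasing | lra].
Qed.

Lemma Rabs_sin_le (u : R) : Rabs (sin u) <= Rabs u.
Proof.
  assert (Hnonneg : forall v, 0 <= v -> Rabs (sin v) <= v).
  { intros v Hv. assert (Hb := SIN_bound v). assert (Hpi := PI2_1).
    destruct (Rle_lt_dec 1 v); [apply Rabs_le; lra |].
    destruct (Req_dec v 0) as [-> | Hv0]; [rewrite sin_0, Rabs_R0; lra |].
    assert (sin v < v) by (apply sin_lt_x; lra).
    assert (0 <= sin v) by (apply sin_ge_0; lra).
    rewrite Rabs_right; lra. }
  destruct (Rle_lt_dec 0 u).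
  - rewrite (Rabs_right u) by lra. now apply Hnonneg.
  - rewrite (Rabs_left u) by lra. rewrite <- Rabs_Ropp, <- sin_neg. apply Hnonneg; lra.
Qed.

Lemma sin_atan_sub_sq (a b : R) :
  sin (atan a - atan b) ^ 2 = (a - b) ^ 2 / ((1 + a ^ 2) * (1 + b ^ 2)).
Proof.
  rewrite sin_minus, !sin_atan, !cos_atan.
  assert (Ha : 0 < 1 + a²) by (unfold Rsqr; nra).
  assert (Hb : 0 < 1 + b²) by (unfold Rsqr; nra).
  assert (Sa := sqrt_lt_R0 _ Ha). assert (Sb := sqrt_lt_R0 _ Hb).
  assert (Qa := Rsqr_sqrt (1 + a²) ltac:(lra)).
  assert (Qb := Rsqr_sqrt (1 + b²) ltac:(lra)).
  set (sa := sqrt (1 + a²)) in *. set (sb := sqrt (1 + b²)) in *.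
  unfold Rsqr in *.
  replace (1 + a ^ 2) with (sa * sa) by (rewrite Qa; ring).
  replace (1 + b ^ 2) with (sb * sb) by (rewrite Qb; ring).
  field; lra.
Qed.

Lemma ForallOrdPairs_filter {A} (P : A -> A -> Prop) (f : A -> bool) (l : list A) :
  ForallOrdPairs P l -> ForallOrdPairs P (filter f l).
Proof.
  induction 1 as [|a l Ha _ IH]; simpl; [constructor |].
  destruct (f a); [| exact IH].
  constructor; [| exact IH].
  rewrite Forall_forall in *. intros x Hx. apply filter_In in Hx. now apply Ha.
Qed.

Lemma ForallOrdPairs_map {A B} (P : A -> A -> Prop) (Q : B -> B -> Prop)
    (g : A -> B) (l : list A) :
  (forall a b, In a l -> In b l -> P a b -> Q (g a) (g b)) ->
  ForallOrdPairs P l -> ForallOrdPairs Q (map g l).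
Proof.
  intros HPQ Hl. induction Hl as [|a l Ha _ IH]; simpl; constructor.
  - rewrite Forall_forall in *. intros y Hy. apply in_map_iff in Hy.
    destruct Hy as [x [<- Hx]]. apply HPQ; simpl; auto.
  - apply IH. intros; apply HPQ; simpl; auto.
Qed.

Lemma ForallOrdPairs_nth {A} (P : A -> A -> Prop) (dflt : A) (l : list A) :
  (forall i j, (i < length l)%nat -> (j < length l)%nat -> i <> j ->
     P (nth i l dflt) (nth j l dflt)) ->
  ForallOrdPairs P l.
Proof.
  induction l as [|a l IH]; intros H; constructor.
  - rewrite Forall_forall. intros x Hx. apply In_nth with (d := dflt) in Hx.
    destruct Hx as [k [Hk <-]]. apply (H 0%nat (S k)); simpl; lia.
  - apply IH. intros i j Hi Hj Hij. apply (H (S i) (S j)); simpl; lia.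
Qed.

(* Strong induction on the length: the points left of the head [a] lie in
   [[A, a - d]], those right of it in [[a + d, B]]. *)
Lemma separated_points_length (d A B : R) (l : list R) : 0 < d -> A - d <= B ->
  (forall a, In a l -> A <= a <= B) ->
  ForallOrdPairs (fun a b => d <= Rabs (a - b)) l ->
  INR (length l) * d <= B - A + d.
Proof.
  intros Hd. revert A B.
  induction l as [l IH] using
    (well_founded_induction (Wf_nat.well_founded_ltof _ (@length R))).
  intros A B HAB Hin Hsep.
  destruct l as [|a l]; [simpl; lra |].
  inversion Hsep as [|a' l' Ha Hl]; subst. rewrite Forall_forall in Ha.
  assert (Hain := Hin a (or_introl eq_refl)).
  set (left_of := fun x => if Rlt_dec x a then true else false).
  set (right_of := fun x => negb (left_of x)).
  assert (Hleft : INR (length (filter left_of l)) * d <= a - d - A + d).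
  { pose proof (filter_length_le left_of l).
    apply IH; [unfold ltof; simpl; lia | lra | | now apply ForallOrdPairs_filter].
    intros x Hx. apply filter_In in Hx as [Hx Hfx]. unfold left_of in Hfx.
    destruct (Rlt_dec x a); [| discriminate].
    assert (Hs := Ha x Hx). assert (Hxin := Hin x (or_intror Hx)).
    rewrite Rabs_right in Hs; lra. }
  assert (Hright : INR (length (filter right_of l)) * d <= B - (a + d) + d).
  { pose proof (filter_length_le right_of l).
    apply IH; [unfold ltof; simpl; lia | lra | | now apply ForallOrdPairs_filter].
    intros x Hx. apply filter_In in Hx as [Hx Hfx]. unfold right_of, left_of in Hfx.
    destruct (Rlt_dec x a); [discriminate |].
    assert (Hs := Ha x Hx). assert (Hxin := Hin x (or_intror Hx)).
    rewrite Rabs_left1 in Hs; lra. }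
  simpl length. rewrite <- (filter_length left_of l), S_INR, plus_INR. fold right_of.
  lra.
Qed.

Lemma mat2_eq (a b c d a' b' c' d' : R) : a = a' -> b = b' -> c = c' -> d = d' ->
  M2 a b c d = M2 a' b' c' d'.
Proof. intros; subst; reflexivity. Qed.

Lemma mmulA (g h k : mat2) : mmul g (mmul h k) = mmul (mmul g h) k.
Proof. destruct g, h, k; unfold mmul; simpl; apply mat2_eq; ring. Qed.

Lemma mmul1m (g : mat2) : mmul g mI = g.
Proof. destruct g; unfold mmul, mI; simpl; apply mat2_eq; ring. Qed.

Lemma mmulVm (g : mat2) : mdet g = 1 -> mmul (minv g) g = mI.
Proof. destruct g; unfold mdet, mmul, minv, mI; simpl; intros; apply mat2_eq; lra. Qed.

Lemma mmulNm (g h : mat2) : mmul (mopp g) h = mopp (mmul g h).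
Proof. destruct g, h; unfold mmul, mopp; simpl; apply mat2_eq; ring. Qed.

Lemma Tn_add (m n : Z) : mmul (Tn m) (Tn n) = Tn (m + n).
Proof. unfold mmul, Tn; simpl; rewrite plus_IZR; apply mat2_eq; ring. Qed.

Lemma Tn_mem (G : mat2 -> Prop) : is_SL2_subgroup G -> G (Tn 1) -> forall n, G (Tn n).
Proof.
  intros [HI [Hmul [Hinv _]]] HT1.
  apply Z.peano_ind; [exact HI | |].
  - intros n Hn. rewrite <- Z.add_1_r, <- Tn_add. now apply Hmul.
  - intros n Hn. replace (Z.pred n) with (n + -1)%Z by lia. rewrite <- Tn_add.
    replace (Tn (-1)) with (minv (Tn 1)) by (unfold minv, Tn; simpl; apply mat2_eq; ring).
    now apply Hmul, Hinv.
Qed.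

(* Shimizu's lemma: translating [g] by a power of [z |-> z + 1] changes its
   trace by multiples of [mc g], so a small [mc g <> 0] would produce an
   elliptic element. *)
Lemma lower_left_abs_ge1 (G : mat2 -> Prop) (g : mat2) :
  is_SL2_subgroup G -> torsion_free G -> G (Tn 1) -> G g -> mc g <> 0 ->
  1 <= Rabs (mc g).
Proof.
  intros HG Htf HT1 Gg Hc.
  destruct (Rle_lt_dec 1 (Rabs (mc g))) as [H | Hsmall]; [exact H | exfalso].
  pose proof HG as [_ [Hmul _]].
  set (q := mtr g / mc g). set (h := mmul g (Tn (- up q))).
  assert (Gh : G h) by (apply Hmul; [exact Gg | now apply Tn_mem]).
  assert (Hch : mc h = mc g) by (unfold h, mmul, Tn; simpl; ring).
  assert (Htr : mtr h = mc g * (q - IZR (up q))).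
  { unfold h, q, mtr, mmul, Tn; simpl. rewrite opp_IZR. field. exact Hc. }
  assert (Hfrac : Rabs (q - IZR (up q)) <= 1) by (pose proof (archimed q); apply Rabs_le; lra).
  assert (Hell : Rabs (mtr h) < 2).
  { rewrite Htr, Rabs_mult. pose proof (Rabs_pos (mc g)). nra. }
  assert (2 <= Rabs (mtr h)); [| lra].
  apply Htf; [exact Gh | |]; intros E; rewrite E in Hch; simpl in Hch; lra.
Qed.

Definition bottom_det (a b : mat2) : R := mc a * md b - mc b * md a.

Lemma bottom_det_ge1 (G : mat2 -> Prop) (a b : mat2) :
  punctured_surface_group G -> G a -> G b -> ~ same_coset a b ->
  1 <= Rabs (bottom_det a b).
Proof.
  intros [HG [_ [Htf [[HT1 Hcusp] _]]]] Ga Gb Hab.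
  pose proof HG as [_ [Hmul [Hinv [_ Hdet]]]].
  set (g := mmul b (minv a)).
  assert (Gg : G g) by (apply Hmul; [exact Gb | now apply Hinv]).
  assert (Hc : mc g = - bottom_det a b) by (unfold g, bottom_det, mmul, minv; simpl; ring).
  assert (Hga : mmul g a = b) by (unfold g; rewrite <- mmulA, mmulVm by auto; apply mmul1m).
  destruct (Req_dec (mc g) 0) as [H0 | H0].
  - exfalso. apply Hab. destruct (Hcusp g Gg H0) as [n [Hn | Hn]]; exists n.
    + left. now rewrite <- Hga, Hn.
    + right. rewrite <- Hga, Hn. apply mmulNm.
  - rewrite <- Rabs_Ropp, <- Hc. now apply (lower_left_abs_ge1 G).
Qed.

Definition jac2 (g : mat2) (z : R * R) : R :=
  (mc g * Re z + md g) ^ 2 + (mc g * Im z) ^ 2.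

Lemma Im_act (g : mat2) (z : R * R) : Im (act g z) = mdet g * Im z / jac2 g z.
Proof. reflexivity. Qed.

Lemma jac2_gt0 (g : mat2) (z : R * R) :
  mc g <> 0 \/ md g <> 0 -> 0 < Im z -> 0 < jac2 g z.
Proof.
  intros Hrow Hy. unfold jac2.
  destruct (Req_dec (mc g) 0) as [Hc | Hc].
  - destruct Hrow as [|Hd]; [contradiction|]. rewrite Hc. nra.
  - assert (0 < (mc g * Im z)²)
      by (apply Rsqr_pos_lt, Rmult_integral_contrapositive_currified; [exact Hc | lra]).
    rewrite Rsqr_pow2 in *. pose proof (pow2_ge_0 (mc g * Re z + md g)). lra.
Qed.

Lemma same_coset_jac2 (d d' : mat2) (z : R * R) :
  same_coset d d' -> jac2 d' z = jac2 d z.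
Proof.
  intros [n [-> | ->]]; unfold jac2, mopp, mmul, Tn; simpl; ring.
Qed.

Lemma same_coset_mdet (d d' : mat2) : same_coset d d' -> mdet d' = mdet d.
Proof.
  intros [n [-> | ->]]; unfold mdet, mopp, mmul, Tn; simpl; ring.
Qed.

(* [exp (hdist i w) >= cosh (hdist i w) = (|w|^2 + 1) / (2 Im w)]. *)
Lemma exp_hdist_i_ge (w : R * R) : 0 < Im w -> / (2 * Im w) <= exp (hdist ipt w).
Proof.
  intros Hv. unfold hdist, arcosh, ipt, Re, Im in *; cbn [fst snd].
  set (u := 1 + ((0 - fst w) ^ 2 + (1 - snd w) ^ 2) / (2 * 1 * snd w)).
  assert (Hu : / (2 * snd w) <= u).
  { assert (E : u = / (2 * snd w) + snd w / 2 + fst w ^ 2 / (2 * snd w))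
      by (unfold u; field; lra).
    assert (0 <= fst w ^ 2 / (2 * snd w))
      by (apply Rmult_le_pos; [apply pow2_ge_0 | left; apply Rinv_0_lt_compat; lra]).
    lra. }
  assert (0 < / (2 * snd w)) by (apply Rinv_0_lt_compat; lra).
  pose proof (sqrt_pos (u ^ 2 - 1)).
  rewrite exp_ln by lra. lra.
Qed.

Lemma counted_jac2_le (G : mat2 -> Prop) (z : R * R) (t : R) (d : mat2) :
  (forall g, G g -> mdet g = 1) -> 0 < Im z -> counted G z t d ->
  jac2 d z <= 2 * Im z * exp t.
Proof.
  intros Hdet Hy [Gd [dh [Hcos [_ Hdist]]]].
  assert (Hdh : mdet dh = 1) by (rewrite (same_coset_mdet _ _ Hcos); auto).
  rewrite <- (same_coset_jac2 _ _ z Hcos).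
  assert (HJ : 0 < jac2 dh z).
  { apply jac2_gt0; [| exact Hy].
    destruct (Req_dec (mc dh) 0) as [Hc | Hc]; [right | now left].
    intros Hd. unfold mdet in Hdh. rewrite Hc, Hd in Hdh. lra. }
  assert (Him : Im (act dh z) = Im z / jac2 dh z)
    by (rewrite Im_act, Hdh, Rmult_1_l; reflexivity).
  assert (Hexp : / (2 * (Im z / jac2 dh z)) <= exp t).
  { rewrite <- Him. eapply Rle_trans; [apply exp_hdist_i_ge | now apply exp_le_compat].
    rewrite Him. now apply Rdiv_lt_0_compat. }
  replace (/ (2 * (Im z / jac2 dh z))) with (jac2 dh z / (2 * Im z)) in Hexp by (field; lra).
  assert (H := Rmult_le_compat_r (2 * Im z) _ _ ltac:(lra) Hexp).
  replace (jac2 dh z / (2 * Im z) * (2 * Im z)) with (jac2 dh z) in H by (field; lra).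
  lra.
Qed.

(* [pi/2 - arg (c z + d)] reduced modulo [pi]; junk when [mc g = 0]. *)
Definition angle (g : mat2) (z : R * R) : R :=
  atan ((mc g * Re z + md g) / (mc g * Im z)).

Lemma sin_angle_sub_sq (a b : mat2) (z : R * R) :
  mc a <> 0 -> mc b <> 0 -> 0 < Im z ->
  sin (angle a z - angle b z) ^ 2 = (Im z * bottom_det a b) ^ 2 / (jac2 a z * jac2 b z).
Proof.
  intros Ha Hb Hy. unfold angle. rewrite sin_atan_sub_sq.
  assert (Ja : 0 < jac2 a z) by (apply jac2_gt0; [left|]; assumption).
  assert (Jb : 0 < jac2 b z) by (apply jac2_gt0; [left|]; assumption).
  unfold jac2, bottom_det in *. field. repeat split; lra.
Qed.

Lemma angle_sep (a b : mat2) (z : R * R) (T : R) :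
  mc a <> 0 -> mc b <> 0 -> 0 < Im z -> 0 < T ->
  jac2 a z <= 2 * Im z * T -> jac2 b z <= 2 * Im z * T ->
  1 <= Rabs (bottom_det a b) ->
  / (2 * T) <= Rabs (angle a z - angle b z).
Proof.
  intros Ha Hb Hy HT HJa HJb Hdet.
  assert (Ja : 0 < jac2 a z) by (apply jac2_gt0; [left|]; assumption).
  assert (Jb : 0 < jac2 b z) by (apply jac2_gt0; [left|]; assumption).
  set (u := angle a z - angle b z).
  assert (Hsin : / (2 * T) ^ 2 <= sin u ^ 2).
  { unfold u. rewrite sin_angle_sub_sq by assumption.
    assert (HJJ : jac2 a z * jac2 b z <= (2 * Im z * T) ^ 2) by nra.
    assert (Hd2 : 1 <= bottom_det a b ^ 2)
      by (rewrite <- (pow2_abs (bottom_det a b)); nra).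
    apply Rle_trans with ((Im z) ^ 2 / (2 * Im z * T) ^ 2).
    - right. field. lra.
    - apply Rle_trans with ((Im z * bottom_det a b) ^ 2 / (2 * Im z * T) ^ 2).
      + apply Rmult_le_compat_r; [left; apply Rinv_0_lt_compat, pow_lt; nra |].
        rewrite Rpow_mult_distr. pose proof (pow_lt _ 2 Hy). nra.
      + apply Rmult_le_compat_l; [apply pow2_ge_0 |].
        apply Rinv_le_contravar; [nra | exact HJJ]. }
  assert (Hsu := Rabs_sin_le u).
  assert (Hpos : 0 < / (2 * T)) by (apply Rinv_0_lt_compat; lra).
  destruct (Rle_lt_dec (/ (2 * T)) (Rabs (sin u))) as [H | H]; [lra | exfalso].
  rewrite <- (pow2_abs (sin u)), <- pow_inv in Hsin.
  pose proof (Rabs_pos (sin u)). nra.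
Qed.

Definition separated_bottom_rows (s : list mat2) : Prop :=
  ForallOrdPairs (fun a b => 1 <= Rabs (bottom_det a b)) s.

Definition mc_eq0 (g : mat2) : bool := if Req_EM_T (mc g) 0 then true else false.

Lemma mc_eq0_filter_length (s : list mat2) :
  separated_bottom_rows s -> (length (filter mc_eq0 s) <= 1)%nat.
Proof.
  intros Hs. assert (Hf := ForallOrdPairs_filter _ mc_eq0 _ Hs).
  assert (Hin : forall g, In g (filter mc_eq0 s) -> mc g = 0).
  { intros g Hg. apply filter_In in Hg as [_ Hg]. unfold mc_eq0 in Hg.
    now destruct (Req_EM_T (mc g) 0). }
  destruct (filter mc_eq0 s) as [|a [|b r]]; simpl; try lia.
  exfalso. inversion Hf as [|a' l' Ha _]; subst. inversion Ha as [|b' r' Hab]; subst.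
  unfold bottom_det in Hab.
  rewrite (Hin a), (Hin b) in Hab by (simpl; auto).
  rewrite !Rmult_0_l, Rminus_0_r, Rabs_R0 in Hab. lra.
Qed.

(* The angles lie in [(-pi/2, pi/2)] and are [1/(2T)]-separated. *)
Lemma mc_neq0_count (z : R * R) (T : R) (s : list mat2) : 0 < Im z -> 0 < T ->
  (forall d, In d s -> mc d <> 0 /\ jac2 d z <= 2 * Im z * T) ->
  separated_bottom_rows s ->
  INR (length s) <= 2 * PI * T + 1.
Proof.
  intros Hy HT Hin Hs.
  assert (Hd : 0 < / (2 * T)) by (apply Rinv_0_lt_compat; lra).
  pose proof PI_RGT_0.
  assert (Hpack : INR (length (map (fun d => angle d z) s)) * / (2 * T)
                  <= PI / 2 - - PI / 2 + / (2 * T)).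
  { apply separated_points_length; [exact Hd | lra | |].
    - intros x Hx. apply in_map_iff in Hx as [d [<- _]].
      unfold angle. pose proof (atan_bound ((mc d * Re z + md d) / (mc d * Im z))). lra.
    - apply ForallOrdPairs_map with (P := fun a b => 1 <= Rabs (bottom_det a b)); [| exact Hs].
      intros a b Ha Hb Hab. destruct (Hin a Ha), (Hin b Hb). now apply angle_sep. }
  rewrite length_map in Hpack.
  replace (PI / 2 - - PI / 2 + / (2 * T)) with ((2 * PI * T + 1) * / (2 * T)) in Hpack
    by (field; lra).
  now apply Rmult_le_reg_r in Hpack.
Qed.

Lemma separated_bottom_rows_count (z : R * R) (T : R) (s : list mat2) :
  0 < Im z -> 0 < T ->
  (forall d, In d s -> jac2 d z <= 2 * Im z * T) ->
  separated_bottom_rows s ->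
  INR (length s) <= 2 * PI * T + 2.
Proof.
  intros Hy HT Hin Hs.
  rewrite <- (filter_length mc_eq0 s), plus_INR.
  assert (H0 : INR (length (filter mc_eq0 s)) <= 1)
    by (apply (le_INR _ 1), mc_eq0_filter_length, Hs).
  enough (INR (length (filter (fun d => negb (mc_eq0 d)) s)) <= 2 * PI * T + 1) by lra.
  apply (mc_neq0_count z); [exact Hy | exact HT | | now apply ForallOrdPairs_filter].
  intros d Hd. apply filter_In in Hd as [Hd Hneq]. split; [| now apply Hin].
  unfold mc_eq0 in Hneq. now destruct (Req_EM_T (mc d) 0).
Qed.

Lemma Pi_le_2PI_exp (G : mat2 -> Prop) (z : R * R) (t : R) :
  punctured_surface_group G -> 0 < Im z ->
  Pi_le G z t (2 * PI * exp t + 2).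
Proof.
  intros HG Hy s Hcounted Hdistinct.
  pose proof HG as [[_ [_ [_ [_ Hdet]]]] _].
  apply (separated_bottom_rows_count z); [exact Hy | apply exp_pos | |].
  - intros d Hd. apply (counted_jac2_le G); auto.
  - apply ForallOrdPairs_nth with (dflt := mI). intros i j Hi Hj Hij.
    apply (bottom_det_ge1 G); auto; apply Hcounted, nth_In; assumption.
Qed.

Theorem proposition2p1 :
  forall (L : Type) (Gamma : L -> mat2 -> Prop),
    (forall l, punctured_surface_group (Gamma l)) ->
    exists U : R, 0 < U /\
      forall (l : L) (z : R * R) (t : R),
        0 < Im z -> Im z < 1 -> 0 <= t ->
        Pi_le (Gamma l) z t (U * exp t).
Proof.
  intros L Gamma HGamma. exists 10. split; [lra |].
  intros l z t Hy _ Ht s Hcounted Hdistinct.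
  assert (Hexp : 1 <= exp t) by (rewrite <- exp_0; now apply exp_le_compat).
  assert (HPI := PI_4).
  assert (Hbound := Pi_le_2PI_exp (Gamma l) z t (HGamma l) Hy s Hcounted Hdistinct).
  nra.
Qed.
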